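(* Let $R$ be a generalized p.q.-Baer $*$-ring whose projections form a lattice. The following are equivalent: (1) $R$ satisfies the parallelogram law; (2) whenever projections $e,f\in R$ are in position $p'$, $e\sim f$.
   Context: A $*$-ring is a ring with an involution; a projection is $e$ with $e=e^*=e^2$, ordered by $e\le f\iff e=ef$. $R$ is a generalized p.q.-Baer $*$-ring if for every $x\in R$ there are $n\in\mathbb N$ and a projection $e$ with $r_R((xR)^n)=eR$, where $r_R(S)=\{a: sa=0\ \forall s\in S\}$. Projections $e,f$ are equivalent, $e\sim f$, if there is $w\in R$ with $w^*w=e$ and $ww^*=f$. A $*$-ring whose projections form a lattice satisfies the parallelogram law if $e-e\wedge f\sim e\vee f-f$ for all projections $e,f$. Projections $e,f$ in a $*$-ring with unity whose projections form a lattice are in position $p'$ if $e\wedge(1-f)=(1-e)\wedge f=0$. In the paper, the lattice operations are related to generalized central covers $GC$ (smallest central projection $e$ with $x^ne=x^n$ for some $n$) by $e\vee f=f+GC(e(1-f))$ and $e\wedge f=e-GC(e(1-f))$. *)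

From mathcomp Require Import all_boot all_order all_algebra.
Set Implicit Arguments. Unset Strict Implicit. Unset Printing Implicit Defensive.
Import GRing.Theory.
Local Open Scope ring_scope.

Definition is_involution (R : nzRingType) (star : R -> R) : Prop :=
  [/\ forall x y, star (x + y) = star x + star y,
      forall x y, star (x * y) = star y * star x
    & forall x, star (star x) = x].

Section StarRing.
Variables (R : nzRingType) (star : R -> R).

Definition is_proj (e : R) : Prop := e = star e /\ e = e * e.

Definition proj_le (e f : R) : Prop := e = e * f.

(* the set (xR)^n : finite sums of products y_1 ... y_n with y_i in xR *)
Definition prod_xR (x : R) (n : nat) (z : R) : Prop :=
  exists rs : n.-tuple R, z = \prod_(r <- rs) (x * r).
Definition pow_xR (x : R) (n : nat) (z : R) : Prop :=
  exists s : seq R, (forall y, y \in s -> prod_xR x n y) /\ z = \sum_(y <- s) y.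

Definition rann (S : R -> Prop) (a : R) : Prop := forall s, S s -> s * a = 0.

Definition rideal (e : R) (a : R) : Prop := exists r, a = e * r.

Definition gen_pq_baer : Prop :=
  forall x : R, exists n : nat, exists e : R,
    (0 < n)%N /\ is_proj e /\ (forall a, rann (pow_xR x n) a <-> rideal e a).

Definition is_meet (e f m : R) : Prop :=
  [/\ is_proj m, proj_le m e, proj_le m f &
      forall g, is_proj g -> proj_le g e -> proj_le g f -> proj_le g m].
Definition is_join (e f j : R) : Prop :=
  [/\ is_proj j, proj_le e j, proj_le f j &
      forall g, is_proj g -> proj_le e g -> proj_le f g -> proj_le j g].

Definition proj_lattice : Prop :=
  forall e f, is_proj e -> is_proj f ->
    (exists m, is_meet e f m) /\ (exists j, is_join e f j).

Definition proj_equiv (e f : R) : Prop :=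
  exists w, star w * w = e /\ w * star w = f.

Definition parallelogram_law : Prop :=
  forall e f m j, is_proj e -> is_proj f -> is_meet e f m -> is_join e f j ->
    proj_equiv (e - m) (j - f).

Definition position_p' (e f : R) : Prop :=
  is_meet e (1 - f) 0 /\ is_meet (1 - e) f 0.

End StarRing.

(* Only the order structure of the projections matters.  If [e] and [f]
   are in position p', then [e \/ (1 - f) = 1], so the parallelogram law for
   [e] and [1 - f] reads [e ~ f].  Conversely, for arbitrary [e] and [f] the
   projections [e - e /\ f] and [e \/ f - f] are always in position p', so
   equivalence of projections in position p' yields the parallelogram law. *)

From mathcomp Require Import all_boot all_order all_algebra.
Local Open Scope ring_scope.
Import GRing.Theory.

Set Implicit Arguments.
Unset Strict Implicit.

Section ProjectionLattice.
Variables (R : nzRingType) (star : R -> R).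
Hypothesis star_inv : is_involution star.

Local Notation proj := (is_proj star).

Lemma starD x y : star (x + y) = star x + star y.
Proof. by case: star_inv. Qed.

Lemma starM x y : star (x * y) = star y * star x.
Proof. by case: star_inv. Qed.

Lemma starK x : star (star x) = x.
Proof. by case: star_inv. Qed.

Lemma star0 : star 0 = 0.
Proof. by apply: (addIr (star 0)); rewrite -starD !add0r. Qed.

Lemma starB x y : star (x - y) = star x - star y.
Proof. by apply: (addIr (star y)); rewrite -starD !subrK. Qed.

Lemma star1 : star 1 = 1.
Proof. by have := starM (star 1) 1; rewrite mulr1 starK mulr1 => <-. Qed.

Lemma proj0 : proj 0.
Proof. by split; rewrite ?star0 ?mulr0. Qed.

Lemma projC p : proj p -> proj (1 - p).
Proof.
move=> [p_sa p_idem]; split; first by rewrite starB star1 -p_sa.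
by rewrite mulrBr mulr1 mulrBl mul1r -p_idem subrr subr0.
Qed.

Lemma proj_le_mull p q : proj p -> proj q -> proj_le p q -> p = q * p.
Proof. by move=> [p_sa _] [q_sa _] /(congr1 star); rewrite starM -p_sa -q_sa. Qed.

Lemma proj_orth p q : proj p -> proj q -> q * p = 0 -> p * q = 0.
Proof. by move=> [p_sa _] [q_sa _] qp0; rewrite p_sa q_sa -starM qp0 star0. Qed.

Lemma projB p q : proj p -> proj q -> proj_le q p -> proj (p - q).
Proof.
move=> Pp Pq qp; have pq := proj_le_mull Pq Pp qp.
case: Pp => p_sa p_idem; case: Pq => q_sa q_idem.
split; first by rewrite starB -p_sa -q_sa.
by rewrite mulrBr !mulrBl -p_idem -q_idem -qp -pq subrr subr0.
Qed.

Lemma proj_leC p q : proj p -> proj q -> proj_le p q -> proj_le (1 - q) (1 - p).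
Proof.
move=> Pp Pq /(proj_le_mull Pp Pq) pq.
by rewrite /proj_le mulrBr mulr1 mulrBl mul1r -pq subrr subr0.
Qed.

Lemma proj_le_compl (g p : R) : proj_le g (1 - p) -> g * p = 0.
Proof.
by rewrite /proj_le mulrBr mulr1 => /eqP; rewrite -subr_eq0 opprB addrC subrK => /eqP.
Qed.

Lemma proj_le_diff g p q : proj p -> proj q -> proj_le q p ->
  proj_le g (p - q) -> g * p = g /\ g * q = 0.
Proof.
move=> Pp Pq qp gpq; have pq := proj_le_mull Pq Pp qp.
case: Pp Pq => [_ p_idem] [_ q_idem]; split.
- by rewrite gpq -mulrA mulrBl -p_idem -qp.
- by rewrite gpq -mulrA mulrBl -pq -q_idem subrr mulr0.
Qed.

Lemma meet_eq0 p q :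
  (forall g, proj g -> proj_le g p -> proj_le g q -> g = 0) -> is_meet star p q 0.
Proof.
move=> only0; split; rewrite /proj_le ?mul0r //; first exact: proj0.
by move=> g Pg gp gq; rewrite (only0 g Pg gp gq) mul0r.
Qed.

Lemma join_compl_eq1 e f j : proj e -> proj f ->
  is_meet star (1 - e) f 0 -> is_join star e (1 - f) j -> j = 1.
Proof.
move=> Pe Pf [_ _ _ meet0] [Pj ej fj _].
have cj_ce : proj_le (1 - j) (1 - e) by exact: proj_leC.
have cj_f : proj_le (1 - j) f by rewrite -[f](subKr 1); exact: proj_leC (projC Pf) Pj fj.
move: (meet0 _ (projC Pj) cj_ce cj_f); rewrite /proj_le mulr0 => /eqP.
by rewrite subr_eq0 => /eqP.
Qed.

Section MeetJoin.
Variables e f m j : R.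
Hypotheses (Pe : proj e) (Pf : proj f).
Hypotheses (meet_m : is_meet star e f m) (join_j : is_join star e f j).

Lemma meet_diff_compl_diff : is_meet star (e - m) (1 - (j - f)) 0.
Proof.
case: meet_m join_j => Pm me mf m_glb [Pj ej fj _].
apply: meet_eq0 => g Pg /(proj_le_diff Pe Pm me) [ge gm0] /proj_le_compl.
have gj : g * j = g by rewrite -{1}ge -mulrA -ej ge.
rewrite mulrBr gj => /eqP; rewrite subr_eq0 eq_sym => /eqP gf.
by rewrite (m_glb g Pg (esym ge) (esym gf)) gm0.
Qed.

Lemma meet_compl_diff_diff : is_meet star (1 - (e - m)) (j - f) 0.
Proof.
case: meet_m join_j => Pm me mf _ [Pj ej fj j_lub].
apply: meet_eq0 => g Pg /proj_le_compl gem /(proj_le_diff Pj Pf fj) [gj gf0].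
have gm0 : g * m = 0 by rewrite (proj_le_mull Pm Pf mf) mulrA gf0 mul0r.
have ge0 : g * e = 0 by move: gem; rewrite mulrBr gm0 subr0.
have [eg0 fg0] := (proj_orth Pe Pg ge0, proj_orth Pf Pg gf0).
have jg := proj_le_mull Pg Pj (esym gj).
(* [g] is orthogonal to [e] and [f], so [j - g] is a smaller upper bound. *)
have : proj_le j (j - g).
  apply: j_lub; first exact: projB.
  - by rewrite /proj_le mulrBr -ej eg0 subr0.
  - by rewrite /proj_le mulrBr -fj fg0 subr0.
case: Pj => _ j_idem; rewrite /proj_le mulrBr -j_idem -jg => /eqP.
by rewrite eq_sym subr_eq addrC -subr_eq subrr eq_sym => /eqP.
Qed.

End MeetJoin.

End ProjectionLattice.

Theorem mainTheorem12 (R : nzRingType) (star : R -> R) :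
  is_involution star ->
  gen_pq_baer star ->
  proj_lattice star ->
  (parallelogram_law star <->
   (forall e f : R, is_proj star e -> is_proj star f ->
      position_p' star e f -> proj_equiv star e f)).
Proof.
move=> star_inv _ lattice; split.
- move=> pl e f Pe Pf [meet_e_cf meet_ce_f].
  have Pcf := projC star_inv Pf.
  have [_ [j join_j]] := lattice e (1 - f) Pe Pcf.
  have := pl e (1 - f) 0 j Pe Pcf meet_e_cf join_j.
  by rewrite (join_compl_eq1 star_inv Pe Pf meet_ce_f join_j) subr0 subKr.
- move=> equiv_p' e f m j Pe Pf meet_m join_j.
  have [Pm me _ _] := meet_m; have [Pj _ fj _] := join_j.
  apply: equiv_p'; [exact: projB | exact: projB | split].
  + exact: meet_diff_compl_diff.
  + exact: meet_compl_diff_diff.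
Qed.
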